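(* Let $K$ be a field of characteristic $\neq 2$ containing a square root $i$ of $-1$, and let $A\in K\setminus\{0\}$ be a non-zero constant. Then $$\#\{S(P): P \text{ a Markoff triple for } A,\ h(P)\le H\}\sim \tfrac14 H^2\qquad (H\to\infty).$$
   Context: For $A\in K[t]$ non-zero, consider solutions $(x,y,z)\in K[t]^3$ of $x^2+y^2+z^2=Axyz$. The degree of the zero polynomial is $-\infty$. The height of a solution $P=(x,y,z)$ is $h(P)=\max\{\deg x,\deg y,\deg z\}$, and its signature is $S(P)=(\deg x,\deg y,\deg z)$. A Markoff triple is a solution $P=(x,y,z)$ with $h(P)>0$ and $\deg x\le\deg y\le\deg z$. The count is of distinct signatures. *)

From HB Require Import structures.
From mathcomp Require Import all_boot all_order all_algebra.
Set Implicit Arguments. Unset Strict Implicit. Unset Printing Implicit Defensive.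
Import Order.TTheory GRing.Theory Num.Theory.
Local Open Scope ring_scope.

(* Degrees in N ∪ {-oo}: None = -oo, Some d = d. *)
Definition pdeg (K : fieldType) (p : {poly K}) : option nat :=
  if p == 0 then None else Some (size p).-1.

Definition ole (a b : option nat) : bool :=
  match a, b with
  | None, _ => true
  | Some _, None => false
  | Some m, Some n => (m <= n)%N
  end.

Definition omax (a b : option nat) : option nat := if ole a b then b else a.

Definition ptriple (K : fieldType) := ({poly K} * {poly K} * {poly K})%type.

Definition is_solution (K : fieldType) (A : {poly K}) (P : ptriple K) : Prop :=
  let: (x, y, z) := P in x ^+ 2 + y ^+ 2 + z ^+ 2 = A * x * y * z.

Definition height (K : fieldType) (P : ptriple K) : option nat :=
  let: (x, y, z) := P in omax (pdeg x) (omax (pdeg y) (pdeg z)).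

Definition signature (K : fieldType) (P : ptriple K) :
  (option nat * option nat * option nat)%type :=
  let: (x, y, z) := P in (pdeg x, pdeg y, pdeg z).

Definition markoff_triple (K : fieldType) (A : {poly K}) (P : ptriple K) : Prop :=
  let: (x, y, z) := P in
  [/\ is_solution A P, ole (Some 1%N) (height P),
      ole (pdeg x) (pdeg y) & ole (pdeg y) (pdeg z)].

Definition num_signatures (K : fieldType) (A : {poly K}) (H n : nat) : Prop :=
  exists s : seq (option nat * option nat * option nat),
    [/\ uniq s, size s = n &
        forall t, t \in s <->
          exists P : ptriple K, [/\ markoff_triple A P,
                                    ole (height P) (Some H) & signature P = t]].

From HB Require Import structures.
From mathcomp Require Import all_boot all_order all_algebra.
From mathcomp Require Import zify ring lra.
Set Implicit Arguments. Unset Strict Implicit. Unset Printing Implicit Defensive.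
Import Order.TTheory GRing.Theory Num.Theory.
Local Open Scope ring_scope.

(* For constant A, comparing degrees in x^2 + y^2 + z^2 = A x y z shows that a Markoff
   triple with x <> 0 has signature (a, b, a + b) with a <= b, and that x = 0 forces
   y^2 = -z^2, hence signature (-oo, c, c).  Conversely every such signature occurs:
   (-oo, c, c) via (0, t^c, i t^c), (0, b, b) via (2/A, t^b + 2i/A, t^b), and (a, b, a + b)
   with a > 0 from a triple of signature (a, b - a, b) or (b - a, a, b) by the Vieta move
   z |-> A x y - z.  Signatures of height at most H are thus counted by
   H + sum_(1 <= s <= H) (s/2 + 1), which is H^2/4 + O(H). *)

Section PolyDegree.
Variable K : fieldType.
Implicit Types p q r : {poly K}.

Lemma size_mul_succ p q m n :
  size p = m.+1 -> size q = n.+1 -> size (p * q) = (m + n).+1.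
Proof.
move=> sp sq; rewrite size_mul ?sp ?sq; first lia.
  by rewrite -size_poly_gt0 sp.
by rewrite -size_poly_gt0 sq.
Qed.

Lemma size_sqr_succ p n : size p = n.+1 -> size (p ^+ 2) = (n + n).+1.
Proof. by move=> sp; rewrite expr2 (size_mul_succ sp sp). Qed.

Lemma size_subl p q : (size q < size p)%N -> size (p - q)%R = size p.
Proof. by move=> lt_qp; rewrite size_polyDl // size_polyN. Qed.

Lemma size_add3 p q r :
  (size (p + q + r)%R <= maxn (size p) (maxn (size q) (size r)))%N.
Proof.
apply: leq_trans (size_polyD _ _) _; rewrite geq_max maxnA leq_maxr andbT.
by apply: leq_trans (size_polyD _ _) _; rewrite leq_maxl.
Qed.

Lemma pdeg_None p : (pdeg p = None) <-> p = 0.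
Proof. by rewrite /pdeg; case: eqP. Qed.

Lemma pdeg0 : pdeg (0 : {poly K}) = None.
Proof. exact/pdeg_None. Qed.

Lemma pdeg_Some p n : (pdeg p = Some n) <-> size p = n.+1.
Proof.
rewrite /pdeg; have [->|p0] := eqVneq p 0; first by rewrite size_poly0.
rewrite (polySpred p0); split=> [[<-]|[->]] //; exact: polySpred.
Qed.

Lemma pdeg_eq_of_addsqr_eq0 p q : p ^+ 2 + q ^+ 2 = 0 -> pdeg p = pdeg q.
Proof.
move/eqP; rewrite addr_eq0 => /eqP pq.
have [p0|/negPf p0] := eqVneq p 0.
  by move: pq; rewrite p0 expr0n /= => /esym/eqP; rewrite oppr_eq0 expf_eq0 /= => /eqP->.
have /negPf q0 : q != 0.
  by apply: contraFneq p0 => q0; move: pq; rewrite q0 expr0n oppr0 => /eqP; rewrite expf_eq0.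
have := congr1 (fun s : {poly K} => (size s).-1) pq; rewrite /= size_polyN !size_exp => e.
by move/eqP: e; rewrite eqn_pmul2r // /pdeg p0 q0 => /eqP->.
Qed.

End PolyDegree.

Lemma height_sorted (K : fieldType) (x y z : {poly K}) :
  ole (pdeg x) (pdeg y) -> ole (pdeg y) (pdeg z) -> height (x, y, z) = pdeg z.
Proof.
rewrite /height /omax.
by case: (pdeg x) (pdeg y) (pdeg z) => [a|] [b|] [c|] //= hab hbc; rewrite hbc ?(leq_trans hab hbc).
Qed.

Section MarkoffMoves.
Variables (K : fieldType) (A : {poly K}).
Implicit Types x y z : {poly K}.

Lemma is_solution_swap x y z : is_solution A (x, y, z) -> is_solution A (y, x, z).
Proof. by rewrite /is_solution => E; rewrite (addrC (y ^+ 2)) E; ring. Qed.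

(* [y] and [A x z - y] are the two roots of the equation seen as a quadratic in [y]. *)
Lemma is_solution_vieta x y z :
  is_solution A (x, y, z) -> is_solution A (x, z, A * x * z - y).
Proof.
rewrite /is_solution => E; apply/eqP; rewrite -subr_eq0.
have -> : x ^+ 2 + z ^+ 2 + (A * x * z - y) ^+ 2 - A * x * z * (A * x * z - y)
        = x ^+ 2 + y ^+ 2 + z ^+ 2 - A * x * y * z by ring.
by rewrite E subrr.
Qed.

End MarkoffMoves.

Section MarkoffConstant.
Variables (K : fieldType) (A : K).
Hypothesis A_neq0 : A != 0.

Let size_A : size A%:P = 1%N.
Proof. by rewrite size_polyC A_neq0. Qed.

Lemma is_solution_vieta_size x y z a b c :
  is_solution A%:P (x, y, z) ->
  size x = a.+1 -> size y = c.+1 -> size z = b.+1 -> (c < a + b)%N ->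
  is_solution A%:P (x, z, A%:P * x * z - y) /\ size (A%:P * x * z - y) = (a + b).+1.
Proof.
move=> E sx sy sz lt_cab; split; first exact: is_solution_vieta.
have sAxz : size (A%:P * x * z) = (a + b).+1.
  by rewrite (size_mul_succ (size_mul_succ size_A sx) sz).
by rewrite size_subl sAxz // sy ltnS.
Qed.

Lemma markoff_deg_sum x y z a b c :
  is_solution A%:P (x, y, z) ->
  size x = a.+1 -> size y = b.+1 -> size z = c.+1 -> (a <= b <= c)%N ->
  c = (a + b)%N.
Proof.
move=> E sx sy sz /andP[le_ab le_bc].
have sRHS : size (A%:P * x * y * z) = (a + b + c).+1.
  by rewrite (size_mul_succ (size_mul_succ (size_mul_succ size_A sx) sy) sz).
have [lt_c_ab | ] := ltnP c (a + b).
  have := size_add3 (x ^+ 2) (y ^+ 2) (z ^+ 2).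
  by rewrite E sRHS !(size_sqr_succ sx, size_sqr_succ sy, size_sqr_succ sz); lia.
rewrite leq_eqVlt => /orP[/eqP // | lt_ab_c].
have lt_xy_z : (size (x ^+ 2 + y ^+ 2)%R < size (z ^+ 2))%N.
  apply: leq_ltn_trans (size_polyD _ _) _.
  by rewrite (size_sqr_succ sx) (size_sqr_succ sy) (size_sqr_succ sz) gtn_max; lia.
have := congr1 (fun p : {poly K} => size p) E.
by rewrite /= addrC size_polyDl // sRHS (size_sqr_succ sz); lia.
Qed.

Variable i : K.
Hypothesis sqr_i : i ^+ 2 = -1.
Hypothesis two_neq0 : 2%:R != 0 :> K.

Let sqr_iP : i%:P ^+ 2 = -1.
Proof. by rewrite -rmorphXn /= sqr_i polyCN polyC1. Qed.

Lemma is_solution_zero_first c : is_solution A%:P (0, 'X^c, i%:P * 'X^c).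
Proof. by rewrite /is_solution mulr0 !mul0r exprMn sqr_iP; ring. Qed.

Lemma markoff_sizes_base b : (0 < b)%N ->
  exists x y z : {poly K}, is_solution A%:P (x, y, z) /\
                [/\ size x = 1%N, size y = b.+1 & size z = b.+1].
Proof.
move=> b_gt0; pose c := 2%:R / A.
have c_neq0 : c != 0 by rewrite mulf_neq0 // invr_eq0.
have Ac : A%:P * c%:P = 2%:R by rewrite -polyCM /c mulrC mulfVK // polyC_natr.
clearbody c; exists c%:P, ('X^b + (c * i)%:P), 'X^b; split.
  apply/eqP; rewrite -subr_eq0 Ac.
  have -> : c%:P ^+ 2 + ('X^b + (c * i)%:P) ^+ 2 + 'X^b ^+ 2 - 2%:R * ('X^b + (c * i)%:P) * 'X^b
          = c%:P ^+ 2 * (1 + i%:P ^+ 2) by rewrite polyCM; ring.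
  by rewrite sqr_iP addrN mulr0.
by rewrite size_polyC c_neq0 size_polyDl ?size_polyXn // (leq_ltn_trans (size_polyC_leq1 _)).
Qed.

(* Euclid's algorithm run backwards: a triple of sizes (a, b - a, b), up to swapping its
   first two entries, is sent by a Vieta move to one of sizes (a, b, a + b). *)
Lemma markoff_sizes_exist a b : (a <= b)%N -> (0 < b)%N ->
  exists x y z : {poly K}, is_solution A%:P (x, y, z) /\
                [/\ size x = a.+1, size y = b.+1 & size z = (a + b).+1].
Proof.
have [n] := ubnP (a + b); elim: n a b => // n IH a b lt_ab_n le_ab b_gt0.
have [-> | a_gt0] := posnP a; first exact: markoff_sizes_base.
have [x [y [z [E [sx sy sz]]]]] : exists x y z : {poly K}, is_solution A%:P (x, y, z) /\
    [/\ size x = a.+1, size y = (b - a).+1 & size z = b.+1].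
  have [le_a_ba | lt_ba_a] := leqP a (b - a).
    have [x [y [z [E [sx sy sz]]]]] := IH a (b - a)%N ltac:(lia) le_a_ba ltac:(lia).
    by exists x, y, z; split => //; split => //; rewrite sz; congr _.+1; lia.
  have [x [y [z [E [sx sy sz]]]]] := IH (b - a)%N a ltac:(lia) ltac:(lia) a_gt0.
  exists y, x, z; split; first exact: is_solution_swap.
  by split => //; rewrite sz; congr _.+1; lia.
have [E' sz'] := is_solution_vieta_size E sx sy sz ltac:(lia).
by exists x, z, (A%:P * x * z - y).
Qed.

End MarkoffConstant.

Definition markoff_signature (t : option nat * option nat * option nat) : Prop :=
  (exists c, t = (None, Some c, Some c) /\ (0 < c)%N) \/
  (exists a b, t = (Some a, Some b, Some (a + b)%N) /\ (a <= b)%N /\ (0 < b)%N).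

Lemma markoff_triple_sorted (K : fieldType) (A x y z : {poly K}) :
  is_solution A (x, y, z) -> ole (pdeg x) (pdeg y) -> ole (pdeg y) (pdeg z) ->
  ole (Some 1%N) (pdeg z) -> markoff_triple A (x, y, z).
Proof. by move=> E le_xy le_yz z_gt0; split; rewrite ?height_sorted. Qed.

Lemma markoff_triple_height (K : fieldType) (A : {poly K}) P :
  markoff_triple A P -> height P = (signature P).2.
Proof. by case: P => [[x y] z] [_ _ le_xy le_yz]; exact: height_sorted. Qed.

Section MarkoffSignatures.
Variables (K : fieldType) (A : K).
Hypothesis A_neq0 : A != 0.

Lemma markoff_triple_signature P :
  markoff_triple A%:P P -> markoff_signature (signature P).
Proof.
case: P => [[x y] z] [E z_gt0 le_xy le_yz]; rewrite /signature.
rewrite height_sorted // in z_gt0.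
case Ex: (pdeg x) le_xy => [a|] le_xy.
  case Ey: (pdeg y) le_xy le_yz => [b|] //; case Ez: (pdeg z) z_gt0 => [c|] //= c_gt0 le_ab le_bc.
  have c_ab : c = (a + b)%N.
    by apply: (markoff_deg_sum A_neq0 E); rewrite -?pdeg_Some ?le_ab.
  by right; exists a, b; rewrite -c_ab; split=> //; lia.
move/pdeg_None: Ex E => -> /eqP; rewrite expr0n mulr0 !mul0r add0r => /eqP /pdeg_eq_of_addsqr_eq0 Eyz.
by rewrite Eyz; case: (pdeg z) z_gt0 => [c|] // c_gt0; left; exists c.
Qed.

Variable i : K.
Hypothesis sqr_i : i ^+ 2 = -1.
Hypothesis two_neq0 : 2%:R != 0 :> K.

Lemma markoff_signature_realized t : markoff_signature t ->
  exists P, markoff_triple A%:P P /\ signature P = t.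
Proof.
case=> [[c [-> c_gt0]] | [a [b [-> [le_ab b_gt0]]]]].
  have i_neq0 : i != 0.
    by apply: contra_eq_neq sqr_i => ->; rewrite expr0n eq_sym oppr_eq0 oner_eq0.
  have sX : pdeg ('X^c : {poly K}) = Some c by apply/pdeg_Some; rewrite size_polyXn.
  have siX : pdeg (i%:P * 'X^c) = Some c by apply/pdeg_Some; rewrite size_Cmul ?size_polyXn.
  exists (0, 'X^c, i%:P * 'X^c); rewrite /signature pdeg0 sX siX; split=> //.
  by apply: markoff_triple_sorted; rewrite ?pdeg0 ?sX ?siX //=; exact: is_solution_zero_first.
have [x [y [z [E [/pdeg_Some sx /pdeg_Some sy /pdeg_Some sz]]]]] :=
  markoff_sizes_exist A_neq0 sqr_i two_neq0 le_ab b_gt0.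
exists (x, y, z); rewrite /signature sx sy sz; split=> //.
by apply: markoff_triple_sorted; rewrite ?sx ?sy ?sz //= ?le_ab; lia.
Qed.

End MarkoffSignatures.

Definition markoff_signatures (H : nat) : seq (option nat * option nat * option nat) :=
  [seq (None, Some c, Some c) | c <- iota 1 H] ++
  [seq (Some a, Some (s - a)%N, Some s) | s <- iota 1 H, a <- iota 0 (s./2).+1].

Lemma markoff_signatures_uniq H : uniq (markoff_signatures H).
Proof.
rewrite cat_uniq; apply/and3P; split.
- by rewrite map_inj_uniq ?iota_uniq // => c1 c2 [].
- by apply/hasPn => t /allpairsPdep [s [a [_ _ ->]]]; apply/mapP => -[c _].
- apply: allpairs_uniq_dep => [|s _|[s1 a1] [s2 a2] _ _ /= [-> _ ->]] //; exact: iota_uniq.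
Qed.

Lemma mem_markoff_signatures H t :
  t \in markoff_signatures H <-> markoff_signature t /\ ole t.2 (Some H).
Proof.
rewrite mem_cat; split.
  case/orP => [/mapP[c] | /allpairsPdep[s [a []]]]; rewrite !mem_iota.
    move=> c_range ->; split=> /=; last by lia.
    by left; exists c; split=> //; lia.
  move=> s_range a_range ->; have le_a2s : (a.*2 <= s)%N by rewrite -geq_half_double; lia.
  split=> //=; last by lia.
  by right; exists a, (s - a)%N; rewrite subnKC; [split=> //; lia | lia].
case=> [[[c [-> c_gt0]] | [a [b [-> [le_ab b_gt0]]]]] le_H]; rewrite /= in le_H; apply/orP.
  by left; apply/mapP; exists c; rewrite // mem_iota; lia.
right; apply/allpairsPdep; exists (a + b)%N, a; rewrite !mem_iota addKn.
by split=> //; [lia | rewrite add0n ltnS geq_half_double; lia].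
Qed.

Lemma size_markoff_signatures H :
  size (markoff_signatures H) = (H + sumn [seq (s./2).+1 | s <- iota 1 H])%N.
Proof.
rewrite size_cat size_map size_iota size_allpairs_dep; congr (_ + sumn _)%N.
by apply: eq_map => s; rewrite size_iota.
Qed.

Lemma sum_half_succ_bounds H :
  (H * H <= 4 * (H + sumn [seq (s./2).+1 | s <- iota 1 H]) <= H * H + 9 * H)%N.
Proof.
elim: H => [//|H /andP[lb ub]].
rewrite -addn1 iotaD add1n map_cat sumn_cat /= addn0 addn1.
by have := odd_double_half H.+1; case: (odd H.+1) => /= e; apply/andP; split; lia.
Qed.

Lemma ratio_sqr_quarter (R : archiRealFieldType) (N : nat -> nat) :
  (forall H, H * H <= 4 * N H <= H * H + 9 * H)%N ->
  forall eps : R, 0 < eps -> exists H0 : nat, forall H : nat, (H0 <= H)%N ->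
    `|(N H)%:R / H%:R ^+ 2 - 1 / 4%:R| < eps.
Proof.
move=> N_bounds eps eps_gt0; exists (Num.truncn (9 / eps)).+1 => H le_H0_H.
have /andP[lb ub] := N_bounds H.
have h_gt0 : 0 < H%:R :> R by rewrite ltr0n; lia.
have h9 : 9 < eps * H%:R.
  rewrite mulrC -ltr_pdivrMr //; apply: lt_le_trans (truncnS_gt _) _.
  by rewrite ler_nat.
have L : H%:R * H%:R <= 4 * (N H)%:R :> R by rewrite -(ler_nat R) !natrM in lb.
have U : 4 * (N H)%:R <= H%:R * H%:R + 9 * H%:R :> R.
  by rewrite -(ler_nat R) natrD !natrM in ub.
move: L U h9 h_gt0; set h := H%:R : R; set m := (N H)%:R : R => L U h9 h_gt0.
have -> : m / h ^+ 2 - 1 / 4%:R = (4 * m - h * h) / (4 * (h * h)) by field; rewrite gt_eqF.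
have d_gt0 : 0 < 4 * (h * h) by rewrite !mulr_gt0.
rewrite ger0_norm; last by apply: divr_ge0; [lra | exact: ltW].
rewrite ltr_pdivrMr //.
have : 0 < h * (eps * h - 9) by rewrite mulr_gt0 // subr_gt0.
nra.
Qed.

Theorem theorem1p4 (K : fieldType) (hchar : (2%:R : K) != 0)
    (hi : exists i : K, i ^+ 2 = -1) (A : K) (hA : A != 0) :
  exists N : nat -> nat,
    (forall H : nat, num_signatures A%:P H (N H)) /\
    (forall eps : rat, 0 < eps -> exists H0 : nat, forall H : nat, (H0 <= H)%N ->
       `| (N H)%:R / (H%:R ^+ 2) - 1 / 4%:R | < eps).
Proof.
have [i sqr_i] := hi.
exists (fun H => size (markoff_signatures H)); split.
  move=> H; exists (markoff_signatures H); split=> // [|t].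
    exact: markoff_signatures_uniq.
  rewrite mem_markoff_signatures; split.
    case=> /(markoff_signature_realized hA sqr_i hchar) [P [mP <-]] le_H.
    by exists P; rewrite (markoff_triple_height mP).
  case=> P [mP le_H <-]; split; first exact: (markoff_triple_signature hA mP).
  by rewrite -(markoff_triple_height mP).
apply: ratio_sqr_quarter => H.
by rewrite size_markoff_signatures; exact: sum_half_succ_bounds.
Qed.
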